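(* Let $N\ge 1$ and let $\lambda,\mu$ be complex parameters. Consider fields $x,\widetilde{x},\widehat{x},\widehat{\widetilde{x}}\in\mathbb{C}^N$ with indices taken modulo $N$. Suppose that $x,\widetilde{x},\widehat{x}$ satisfy, for all $k$, $$(E)\qquad \frac{\widetilde{x}_k-x_k+\lambda}{\widetilde{x}_k-x_k-\lambda}\cdot\frac{x_k-\widetilde{x}_{k-1}+\lambda}{x_k-\widetilde{x}_{k-1}-\lambda}=\frac{\widehat{x}_k-x_k+\mu}{\widehat{x}_k-x_k-\mu}\cdot\frac{x_k-\widehat{x}_{k-1}+\mu}{x_k-\widehat{x}_{k-1}-\mu}.$$ Consider the superposition formulas $$(S1)\quad \mu(\widehat{\widetilde{x}}_k-\widehat{x}_k)(x_{k+1}-\widetilde{x}_k)-\lambda(\widehat{\widetilde{x}}_k-\widetilde{x}_k)(x_{k+1}-\widehat{x}_k)+\lambda\mu(\lambda-\mu)=0,$$ $$(S2)\quad \mu(\widetilde{x}_{k+1}-x_{k+1})(\widehat{x}_{k+1}-\widehat{\widetilde{x}}_k)-\lambda(\widehat{x}_{k+1}-x_{k+1})(\widetilde{x}_{k+1}-\widehat{\widetilde{x}}_k)+\lambda\mu(\lambda-\mu)=0.$$ Then, by virtue of $(E)$, (S1) and (S2) are equivalent, and if $\widehat{\widetilde{x}}$ is defined by either of them, then for all $k$: $$(E_1)\quad \frac{\widetilde{x}_k-x_k+\lambda}{\widetilde{x}_k-x_k-\lambda}\cdot\frac{x_{k+1}-\widetilde{x}_k+\lambda}{x_{k+1}-\widetilde{x}_k-\lambda}=\frac{\widehat{\widetilde{x}}_k-\widetilde{x}_k+\mu}{\widehat{\widetilde{x}}_k-\widetilde{x}_k-\mu}\cdot\frac{\widetilde{x}_k-\widehat{\widetilde{x}}_{k-1}+\mu}{\widetilde{x}_k-\widehat{\widetilde{x}}_{k-1}-\mu},$$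 $$(E_2)\quad \frac{\widehat{x}_k-x_k+\mu}{\widehat{x}_k-x_k-\mu}\cdot\frac{x_{k+1}-\widehat{x}_k+\mu}{x_{k+1}-\widehat{x}_k-\mu}=\frac{\widehat{\widetilde{x}}_k-\widehat{x}_k+\lambda}{\widehat{\widetilde{x}}_k-\widehat{x}_k-\lambda}\cdot\frac{\widehat{x}_k-\widehat{\widetilde{x}}_{k-1}+\lambda}{\widehat{x}_k-\widehat{\widetilde{x}}_{k-1}-\lambda},$$ $$(E_{12})\quad \frac{\widehat{\widetilde{x}}_k-\widehat{x}_k+\lambda}{\widehat{\widetilde{x}}_k-\widehat{x}_k-\lambda}\cdot\frac{\widehat{x}_{k+1}-\widehat{\widetilde{x}}_k+\lambda}{\widehat{x}_{k+1}-\widehat{\widetilde{x}}_k-\lambda}=\frac{\widehat{\widetilde{x}}_k-\widetilde{x}_k+\mu}{\widehat{\widetilde{x}}_k-\widetilde{x}_k-\mu}\cdot\frac{\widetilde{x}_{k+1}-\widehat{\widetilde{x}}_k+\mu}{\widetilde{x}_{k+1}-\widehat{\widetilde{x}}_k-\mu}.$$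
   Context: These are the corner equations for two Bäcklund transformations $F_\lambda,F_\mu$ of the periodic symmetric rational multiplicative Toda-type system $\ddot x_k=-(\dot x_k^2-1)\big(\frac{1}{x_{k+1}-x_k}-\frac{1}{x_k-x_{k-1}}\big)$, where $F_\lambda:(x,p)\mapsto(\widetilde x,\widetilde p)$ is $e^{2p_k}=\frac{\widetilde x_k-x_k+\lambda}{\widetilde x_k-x_k-\lambda}\cdot\frac{x_k-\widetilde x_{k-1}+\lambda}{x_k-\widetilde x_{k-1}-\lambda}$, $e^{2\widetilde p_k}=\frac{\widetilde x_k-x_k+\lambda}{\widetilde x_k-x_k-\lambda}\cdot\frac{x_{k+1}-\widetilde x_k+\lambda}{x_{k+1}-\widetilde x_k-\lambda}$; hats denote the action of $F_\mu$. *)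

From HB Require Import structures.
From mathcomp Require Import all_boot all_order all_algebra.
From mathcomp Require Import complex.
From mathcomp Require Import reals.
Set Implicit Arguments. Unset Strict Implicit. Unset Printing Implicit Defensive.
Import Order.TTheory GRing.Theory Num.Theory.
Local Open Scope ring_scope.

Section Toda.
Variable F : fieldType.
Variable N : nat.

(* indices modulo N: k+1 and k-1 on 'I_N *)
Definition nxt (k : 'I_N) : 'I_N := ordS k.
Definition prv (k : 'I_N) : 'I_N := ord_pred k.

Definition phi (d nu : F) : F := (d + nu) / (d - nu).

Definition nondeg (d nu : F) : Prop := d + nu <> 0 /\ d - nu <> 0.

Variables (lam mu : F) (x xt xh xht : 'I_N -> F).

Definition btE (k : 'I_N) : Prop :=
  phi (xt k - x k) lam * phi (x k - xt (prv k)) lam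
  = phi (xh k - x k) mu * phi (x k - xh (prv k)) mu.

Definition btS1 (k : 'I_N) : Prop :=
  mu * (xht k - xh k) * (x (nxt k) - xt k)
  - lam * (xht k - xt k) * (x (nxt k) - xh k) + lam * mu * (lam - mu) = 0.

Definition btS2 (k : 'I_N) : Prop :=
  mu * (xt (nxt k) - x (nxt k)) * (xh (nxt k) - xht k)
  - lam * (xh (nxt k) - x (nxt k)) * (xt (nxt k) - xht k) + lam * mu * (lam - mu) = 0.

Definition btE1 (k : 'I_N) : Prop :=
  phi (xt k - x k) lam * phi (x (nxt k) - xt k) lam
  = phi (xht k - xt k) mu * phi (xt k - xht (prv k)) mu.

Definition btE2 (k : 'I_N) : Prop :=
  phi (xh k - x k) mu * phi (x (nxt k) - xh k) mu
  = phi (xht k - xh k) lam * phi (xh k - xht (prv k)) lam.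

Definition btE12 (k : 'I_N) : Prop :=
  phi (xht k - xh k) lam * phi (xh (nxt k) - xht k) lam
  = phi (xht k - xt k) mu * phi (xt (nxt k) - xht k) mu.

(* genericity: every factor occurring in (E), (E1), (E2), (E12) at index k
   is well defined and nonzero *)
Definition generic (k : 'I_N) : Prop :=
  (nondeg (xt k - x k) lam /\ nondeg (x k - xt (prv k)) lam /\
   nondeg (x (nxt k) - xt k) lam /\ nondeg (xht k - xh k) lam /\
   nondeg (xh k - xht (prv k)) lam /\ nondeg (xh (nxt k) - xht k) lam)
  /\
  (nondeg (xh k - x k) mu /\ nondeg (x k - xh (prv k)) mu /\
   nondeg (x (nxt k) - xh k) mu /\ nondeg (xht k - xt k) mu /\
   nondeg (xt k - xht (prv k)) mu /\ nondeg (xt (nxt k) - xht k) mu).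

(* (S1) resp. (S2) at index k genuinely determine xht_k (nonzero coefficient) *)
Definition S1_solvable (k : 'I_N) : Prop :=
  mu * (x (nxt k) - xt k) - lam * (x (nxt k) - xh k) <> 0.
Definition S2_solvable (k : 'I_N) : Prop :=
  lam * (xh (nxt k) - x (nxt k)) - mu * (xt (nxt k) - x (nxt k)) <> 0.

End Toda.

(* Write (S1) and (S2) at site k as equations in the unknown xht_k, linear with
   coefficients S1coef and S2coef.  A polynomial identity shows that
   S1coef * (S2) - S2coef * (S1) is (lam - mu)/2 times the cleared form of (E) at
   site k+1, so under (E) the two superposition formulas are equivalent.  Solving
   (S1) at k and (S2) at k-1 for xht_k and xht_(k-1) turns the cleared forms of
   (E1) and (E2) into rational identities.  Finally (S1) and (S2) at k each yield a
   relation between four phi-factors around xht_k; their product, with the common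
   factors cancelled by (E) at k+1, is (E12). *)
From HB Require Import structures.
From mathcomp Require Import all_boot all_order all_algebra.
From mathcomp Require Import complex.
From mathcomp Require Import reals.
From mathcomp Require Import ring.
Import Order.TTheory GRing.Theory Num.Theory.
Set Implicit Arguments. Unset Strict Implicit. Unset Printing Implicit Defensive.
Local Open Scope ring_scope.

Lemma mul_eq_cancel (R : idomainType) (u1 v1 w1 z1 u2 v2 w2 z2 : R) :
  v1 * v2 != 0 -> u1 * v1 = w1 * z1 -> u2 * v2 = w2 * z2 -> z1 * z2 = v1 * v2 ->
  w1 * w2 = u1 * u2.
Proof.
move=> v12 e1 e2 z12; apply: (mulIf v12).
rewrite -{1}z12; transitivity ((w1 * z1) * (w2 * z2)); first by ring.
by rewrite -e1 -e2; ring.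
Qed.

Section PhiFactors.
Variable F : fieldType.

Definition phi_cross (n1 A B n2 C D : F) : F :=
  (A + n1) * (B + n1) * ((C - n2) * (D - n2))
  - (C + n2) * (D + n2) * ((A - n1) * (B - n1)).

Lemma phi_mul_eqP (n1 A B n2 C D : F) :
  A - n1 != 0 -> B - n1 != 0 -> C - n2 != 0 -> D - n2 != 0 ->
  phi A n1 * phi B n1 = phi C n2 * phi D n2 <-> phi_cross n1 A B n2 C D = 0.
Proof.
move=> An Bn Cn Dn; rewrite /phi !mulf_div.
split=> [/eqP | E0]; first by rewrite eqr_div ?mulf_neq0 // -subr_eq0 => /eqP.
by apply/eqP; rewrite eqr_div ?mulf_neq0 // -subr_eq0 -[_ - _]/(phi_cross _ _ _ _ _ _) E0.
Qed.

Lemma phi_neq0 (d nu : F) : nondeg d nu -> phi d nu != 0.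
Proof. by case=> /eqP dp /eqP dm; rewrite /phi mulf_neq0 ?invr_eq0. Qed.

End PhiFactors.

Section Superposition.
Variables (F : fieldType) (l m : F).
Implicit Types (a b p q P Q X Y : F).

(* (S1) at k reads S1poly (xht k) (xt k) (xh k) (x (k+1)) = 0 and (S2) at k reads
   S2poly (xht k) (x (k+1)) (xt (k+1)) (xh (k+1)) = 0; S1coef and S2coef are the
   coefficients of xht k in them. *)
Definition S1poly X p q b : F :=
  m * (X - q) * (b - p) - l * (X - p) * (b - q) + l * m * (l - m).
Definition S2poly X b P Q : F :=
  m * (P - b) * (Q - X) - l * (Q - b) * (P - X) + l * m * (l - m).
Definition S1coef p q b : F := m * (b - p) - l * (b - q).
Definition S2coef b P Q : F := l * (Q - b) - m * (P - b).

Lemma S1poly_root X p q b : S1coef p q b != 0 -> S1poly X p q b = 0 ->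
  X = (m * q * (b - p) - l * p * (b - q) - l * m * (l - m)) / S1coef p q b.
Proof.
move=> c0 S0; apply: (mulIf c0); rewrite divfK //; apply/eqP.
by rewrite -subr_eq0 -S0 /S1poly /S1coef; apply/eqP; ring.
Qed.

Lemma S2poly_root X b P Q : S2coef b P Q != 0 -> S2poly X b P Q = 0 ->
  X = (l * (Q - b) * P - m * (P - b) * Q - l * m * (l - m)) / S2coef b P Q.
Proof.
move=> c0 S0; apply: (mulIf c0); rewrite divfK //; apply/eqP.
by rewrite -subr_eq0 -S0 /S2poly /S2coef; apply/eqP; ring.
Qed.

Lemma S1poly_S2poly_comb X p q b P Q :
  2 * (S1coef p q b * S2poly X b P Q - S2coef b P Q * S1poly X p q b)
  = (l - m) * phi_cross l (P - b) (b - p) m (Q - b) (b - q).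
Proof. by rewrite /S1coef /S2coef /S1poly /S2poly /phi_cross; ring. Qed.

Lemma S1poly_S2poly_iff X p q b P Q : (2 : F) != 0 ->
  S1coef p q b != 0 -> S2coef b P Q != 0 ->
  phi_cross l (P - b) (b - p) m (Q - b) (b - q) = 0 ->
  S1poly X p q b = 0 <-> S2poly X b P Q = 0.
Proof.
move=> two c1 c2 E0.
have /eqP := S1poly_S2poly_comb X p q b P Q.
rewrite E0 mulr0 mulf_eq0 (negbTE two) subr_eq0 => /eqP comb.
split=> S0.
- by apply: (mulfI c1); rewrite comb S0 !mulr0.
- by apply: (mulfI c2); rewrite -comb S0 !mulr0.
Qed.

Lemma S1poly_S2poly_E1 a b p q X Y :
  S1coef p q b != 0 -> S2coef a p q != 0 -> S1poly X p q b = 0 -> S2poly Y a p q = 0 ->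
  phi_cross l (p - a) (b - p) m (X - p) (p - Y) = 0.
Proof.
move=> c1 c2 /(S1poly_root c1) -> /(S2poly_root c2) ->.
by rewrite /phi_cross /S1coef /S2coef in c1 c2 *; field; rewrite c1 c2.
Qed.

Lemma S1poly_S2poly_E2 a b p q X Y :
  S1coef p q b != 0 -> S2coef a p q != 0 -> S1poly X p q b = 0 -> S2poly Y a p q = 0 ->
  phi_cross m (q - a) (b - q) l (X - q) (q - Y) = 0.
Proof.
move=> c1 c2 /(S1poly_root c1) -> /(S2poly_root c2) ->.
by rewrite /phi_cross /S1coef /S2coef in c1 c2 *; field; rewrite c1 c2.
Qed.

Lemma S1poly_phi_cross X p q b : S1coef p q b != 0 -> S1poly X p q b = 0 ->
  phi_cross m (X - p) (b - q) l (X - q) (b - p) = 0.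
Proof.
move=> c1 /(S1poly_root c1) ->.
by rewrite /phi_cross /S1coef in c1 *; field; rewrite c1.
Qed.

Lemma S2poly_phi_cross X b P Q : S2coef b P Q != 0 -> S2poly X b P Q = 0 ->
  phi_cross m (P - X) (Q - b) l (Q - X) (P - b) = 0.
Proof.
move=> c2 /(S2poly_root c2) ->.
by rewrite /phi_cross /S2coef in c2 *; field; rewrite c2.
Qed.

End Superposition.

Lemma prv_nxt N (k : 'I_N) : prv (nxt k) = k.
Proof. exact: ordSK. Qed.

Lemma nxt_prv N (k : 'I_N) : nxt (prv k) = k.
Proof. exact: ord_predK. Qed.

Section PeriodicChain.
Variables (F : fieldType) (N : nat) (lam mu : F) (x xt xh xht : 'I_N -> F).
Hypothesis gen : forall k, generic lam mu x xt xh xht k.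
Hypothesis S1solv : forall k, S1_solvable lam mu x xt xh k.
Hypothesis S2solv : forall k, S2_solvable lam mu x xt xh k.
Hypothesis HE : forall k, btE lam mu x xt xh k.

Lemma S1coef_neq0 k : S1coef lam mu (xt k) (xh k) (x (nxt k)) != 0.
Proof. exact/eqP/S1solv. Qed.

Lemma S2coef_neq0 k : S2coef lam mu (x (nxt k)) (xt (nxt k)) (xh (nxt k)) != 0.
Proof. exact/eqP/S2solv. Qed.

Lemma btE_next_cross k :
  phi_cross lam (xt (nxt k) - x (nxt k)) (x (nxt k) - xt k)
            mu (xh (nxt k) - x (nxt k)) (x (nxt k) - xh k) = 0.
Proof.
have [[[_ /eqP g1] _] [[_ /eqP h1] _]] := gen (nxt k).
have [[_ [_ [[_ /eqP g3] _]]] [_ [_ [[_ /eqP h3] _]]]] := gen k.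
by apply/(phi_mul_eqP g1 g3 h1 h3); have := HE (nxt k); rewrite /btE prv_nxt.
Qed.

Lemma btS1_iff_btS2 k : (2 : F) != 0 ->
  btS1 lam mu x xt xh xht k <-> btS2 lam mu x xt xh xht k.
Proof.
move=> two.
exact: (S1poly_S2poly_iff (xht k) two (S1coef_neq0 k) (S2coef_neq0 k) (btE_next_cross k)).
Qed.

Lemma btE1_of_superposition k :
  btS1 lam mu x xt xh xht k -> btS2 lam mu x xt xh xht (prv k) -> btE1 lam mu x xt xht k.
Proof.
have [[[_ /eqP g1] [_ [[_ /eqP g3] _]]] [_ [_ [_ [[_ /eqP h4] [[_ /eqP h5] _]]]]]] := gen k.
have := S2coef_neq0 (prv k); rewrite /btS2 nxt_prv => c2 S1 S2.
exact/(phi_mul_eqP g1 g3 h4 h5)/(S1poly_S2poly_E1 (S1coef_neq0 k) c2 S1 S2).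
Qed.

Lemma btE2_of_superposition k :
  btS1 lam mu x xt xh xht k -> btS2 lam mu x xt xh xht (prv k) -> btE2 lam mu x xh xht k.
Proof.
have [[_ [_ [_ [[_ /eqP g4] [[_ /eqP g5] _]]]]] [[_ /eqP h1] [_ [[_ /eqP h3] _]]]] := gen k.
have := S2coef_neq0 (prv k); rewrite /btS2 nxt_prv => c2 S1 S2.
exact/(phi_mul_eqP h1 h3 g4 g5)/(S1poly_S2poly_E2 (S1coef_neq0 k) c2 S1 S2).
Qed.

Lemma btE12_of_superposition k :
  btS1 lam mu x xt xh xht k -> btS2 lam mu x xt xh xht k -> btE12 lam mu xt xh xht k.
Proof.
move=> S1 S2.
have [[_ [_ [[_ /eqP g3] [[_ /eqP g4] [_ [_ /eqP g6]]]]]]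
      [_ [_ [h3 [[_ /eqP h4] [_ [_ /eqP h6]]]]]]] := gen k.
have [[[_ /eqP g1'] _] [h1' _]] := gen (nxt k).
have /eqP h3m := h3.2; have /eqP h1m' := h1'.2.
have R1 := iffRL (phi_mul_eqP h4 h3m g4 g3)
                 (S1poly_phi_cross (S1coef_neq0 k) S1).
have R2 := iffRL (phi_mul_eqP h6 h1m' g6 g1')
                 (S2poly_phi_cross (S2coef_neq0 k) S2).
apply: (mul_eq_cancel _ R1 R2); first by rewrite mulf_neq0 ?phi_neq0.
by rewrite mulrC [in RHS]mulrC; have := HE (nxt k); rewrite /btE prv_nxt.
Qed.

End PeriodicChain.

Local Open Scope complex_scope.

Theorem theorem13 (R : realType) (N : nat) (HN : (0 < N)%N)
  (lam mu : R[i]) (Hlam : lam <> 0) (Hmu : mu <> 0)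
  (x xt xh xht : 'I_N -> R[i])
  (Hgen : forall k, generic lam mu x xt xh xht k)
  (HS1 : forall k, S1_solvable lam mu x xt xh k)
  (HS2 : forall k, S2_solvable lam mu x xt xh k)
  (HE : forall k, btE lam mu x xt xh k) :
  ((forall k, btS1 lam mu x xt xh xht k) <-> (forall k, btS2 lam mu x xt xh xht k))
  /\
  (((forall k, btS1 lam mu x xt xh xht k) \/ (forall k, btS2 lam mu x xt xh xht k)) ->
   forall k, [/\ btE1 lam mu x xt xht k, btE2 lam mu x xh xht k
               & btE12 lam mu xt xh xht k]).
Proof.
have two : (2 : R[i]) != 0 by rewrite pnatr_eq0.
have S12 k := btS1_iff_btS2 Hgen HS1 HS2 HE k two.
have S1_iff_S2 : (forall k, btS1 lam mu x xt xh xht k) <->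
                 (forall k, btS2 lam mu x xt xh xht k).
  by split=> S k; apply/S12.
split=> // S k.
have [S1 S2] : (forall k, btS1 lam mu x xt xh xht k) /\
               (forall k, btS2 lam mu x xt xh xht k).
  by case: S => S; split=> //; apply/S1_iff_S2.
split.
- exact: (btE1_of_superposition Hgen HS1 HS2 (S1 k) (S2 (prv k))).
- exact: (btE2_of_superposition Hgen HS1 HS2 (S1 k) (S2 (prv k))).
- exact: (btE12_of_superposition Hgen HS1 HS2 HE (S1 k) (S2 k)).
Qed.
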